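(* Let $T$ be a (not necessarily binary) planted tree over $L$, let $T'$ and $T''$ be binary trees that both resolve $T$, and let $\sigma$ be a fixed leaf ordering. Let $v$ be a vertex of $T$ with children $u_1,\dots,u_p$ ($p\ge2$), and for each $t$ let $s_t=\min\{\sigma(l): l\in L(T_{u_t})\}$. For a binary resolution $\tilde T\in\{T',T''\}$ let $V_I(B_{\tilde T})$ be the set of internal vertices $w$ of $\tilde T$ whose cluster $cl_{\tilde T}(w)$ is the union of the clusters $L(T_{u_t})$ over at least two children $u_t$ of $v$. Then $$\sigma(V_I(B_{T'}))=\sigma(V_I(B_{T''}))=\{-s_t : 1\le t\le p,\ s_t\ne\min\{s_1,\dots,s_p\}\},$$ where $\sigma(\cdot)$ denotes the OLA index of a vertex computed in $T'$, respectively $T''$.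
   Context: Trees. Fix a finite label set $L$ containing a distinguished label $\rho$, and let $n=|L\setminus\{\rho\}|$. A planted tree $T$ over $L$ is a rooted tree whose top vertex is labeled $\rho$ and has exactly one child $r(T)$ (the root), in which every other non-leaf vertex has at least two children, and whose leaves are bijectively labeled by $L\setminus\{\rho\}$; it is binary if every non-leaf vertex other than $\rho$ has exactly two children. For a vertex $v$, $T_v$ is the subtree rooted at $v$ and $cl(v)=L(T_v)$ is its cluster. A binary tree $T'$ resolves $T$ if $L(T')=L(T)$ and there is a set of edges of $T'$ whose contraction yields $T$. OLA indexing. A leaf ordering is a bijection $\sigma:L\setminus\{\rho\}\to\{0,\dots,n-1\}$. For a binary tree $T'$ over $L$ and a vertex $v\ne\rho$, let $\mu(v)=\min\{\sigma(l): l\in L(T'_v)\setminus\{\rho\}\}$; each leaf $l$ gets index $\sigma(l)$, and each internal vertex $v$ (not a leaf, not $\rho$) with children $v_1,v_2$ gets index $\sigma(v):=-\max\{\mu(v_1),\mu(v_2)\}$. *)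

From mathcomp Require Import all_boot all_order all_algebra.
From Stdlib Require Import Permutation.
Set Implicit Arguments. Unset Strict Implicit. Unset Printing Implicit Defensive.

(* Unordered rooted trees with leaves labelled by X (= L \ {rho}).
   A term [t : tree X] represents the subtree T_{r(T)} hanging below the
   planting vertex rho; the children list of a node is considered up to
   permutation (see [contr]). *)
Inductive tree (X : Type) : Type :=
| Lf of X
| Nd of seq (tree X).
Arguments Lf {X}.
Arguments Nd {X}.

Section Trees.
Variable X : finType.

Fixpoint leaves (t : tree X) : seq X :=
  match t with Lf x => [:: x] | Nd cs => flatten (map leaves cs) end.

Fixpoint all_nodes (P : nat -> bool) (t : tree X) : bool :=
  match t with Lf _ => true | Nd cs => P (size cs) && all (all_nodes P) cs end.

Definition leaf_bij (t : tree X) : Prop :=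
  uniq (leaves t) /\ forall x : X, x \in leaves t.

Definition planted_tree (t : tree X) : Prop :=
  all_nodes (fun k => 1 < k) t /\ leaf_bij t.

Definition binary_tree (t : tree X) : Prop :=
  all_nodes (fun k => k == 2) t /\ leaf_bij t.

(* [subtree s t]: s is T_w for some vertex w of t *)
Inductive subtree : tree X -> tree X -> Prop :=
| sub_refl t : subtree t t
| sub_child s c cs : List.In c cs -> subtree s c -> subtree s (Nd cs).

(* [contr t1 t2]: contracting some set of (inner) edges of t1 yields a tree
   isomorphic to t2.  [fcontr cs ds]: the forest cs of children becomes the
   forest ds (up to reordering). *)
Inductive contr : tree X -> tree X -> Prop :=
| cLf x : contr (Lf x) (Lf x)
| cNd cs ds : fcontr cs ds -> contr (Nd cs) (Nd ds)
with fcontr : seq (tree X) -> seq (tree X) -> Prop :=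
| fnil : fcontr [::] [::]
| fkeep c d cs ds : contr c d -> fcontr cs ds -> fcontr (c :: cs) (d :: ds)
| fcollapse cs' cs ds1 ds2 :
    fcontr cs' ds1 -> fcontr cs ds2 -> fcontr (Nd cs' :: cs) (ds1 ++ ds2)
| fperm cs ds ds' : fcontr cs ds -> Permutation ds ds' -> fcontr cs ds'.

Definition resolves (t' t : tree X) : Prop :=
  binary_tree t' /\ contr t' t.

Definition leaf_ordering (sigma : X -> 'I_#|X|) : Prop := bijective sigma.

(* mu(v) = min sigma over leaves of T_v (the bound #|X| is never attained
   for a nonempty leaf set) *)
Definition mu (sigma : X -> 'I_#|X|) (t : tree X) : nat :=
  \big[minn/#|X|]_(l <- leaves t) (sigma l : nat).

Definition ola (sigma : X -> 'I_#|X|) (t : tree X) : int :=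
  match t with
  | Lf x => Posz (sigma x)
  | Nd [:: a; b] => (- Posz (maxn (mu sigma a) (mu sigma b)))%R
  | Nd _ => 0%R
  end.

Definition is_internal (t : tree X) : bool :=
  if t is Nd _ then true else false.

Definition in_VI (Tt : tree X) (us : seq (tree X)) (w : tree X) : Prop :=
  subtree w Tt /\ is_internal w /\
  exists b : bitseq, size b = size us /\ 1 < count id b /\
    leaves w =i flatten (map leaves (mask b us)).

Definition ola_VI (sigma : X -> 'I_#|X|) (Tt : tree X) (us : seq (tree X))
    (z : int) : Prop :=
  exists w, in_VI Tt us w /\ ola sigma w = z.

Definition target (sigma : X -> 'I_#|X|) (us : seq (tree X)) (z : int) : Prop :=
  exists t, t < size us /\
    let s_t := mu sigma (nth (Nd [::]) us t) in
    s_t != \big[minn/#|X|]_(u <- us) mu sigma u /\ z = (- Posz s_t)%R.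

End Trees.

From Pilot Require Import Defs.
From mathcomp Require Import all_boot all_order all_algebra.
From Stdlib Require Import Permutation.
Set Implicit Arguments. Unset Strict Implicit. Unset Printing Implicit Defensive.

(* Contracting edges preserves clusters, so in a binary resolution the child
   clusters B_t = L(T_{u_t}) of v are pairwise disjoint clusters of vertices,
   and L(T_v) itself is the cluster of a vertex w0.  By induction on a vertex w
   whose cluster is a union of blocks, the OLA indices of the vertices below w
   whose clusters are unions of at least two blocks are exactly the values
   -min B for the blocks B inside cl(w) with min B <> min cl(w).  Indeed, such
   a w has children a, b whose clusters are again unions of blocks; if
   min a < min b, the index of w is -min b, which is the minimum of the block
   of b attaining it, while the non-minimal blocks of cl(w) are those of a that
   are non-minimal in a together with all blocks of b.  Vertices of V_I not
   below w0 add nothing, as the right-hand side grows with the cluster. *)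

Scheme contr_mut := Induction for contr Sort Prop
  with fcontr_mut := Induction for fcontr Sort Prop.

Section Trees.
Variable X : finType.
Implicit Types (t s w a b c : tree X) (cs ds : seq (tree X)).

(* The automatically generated principle gives no hypothesis for the children of [Nd]. *)
Section TreeInd.
Variable P : tree X -> Prop.
Hypothesis P_Lf : forall x, P (Lf x).
Hypothesis P_Nd : forall cs, (forall c, List.In c cs -> P c) -> P (Nd cs).

Fixpoint tree_ind_In t : P t :=
  match t with
  | Lf x => P_Lf x
  | Nd cs => P_Nd ((fix go (l : seq (tree X)) : forall c, List.In c l -> P c :=
      match l return forall c, List.In c l -> P c with
      | [::] => fun c H => match H with end
      | c0 :: l' => fun c H => match H with
          | or_introl E => eq_ind c0 P (tree_ind_In c0) c E
          | or_intror H' => go l' c H' end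
      end) cs)
  end.
End TreeInd.

Lemma In_nth d cs i : i < size cs -> List.In (nth d cs i) cs.
Proof. by elim: cs i => // c cs IH [|i] /= Hi; [left | right; exact: IH]. Qed.

Lemma In_nthP d cs c : List.In c cs -> exists2 i, i < size cs & nth d cs i = c.
Proof.
elim: cs => // c0 cs IH [<-|/IH [i Hi <-]]; first by exists 0.
by exists i.+1.
Qed.

Lemma flatten_leavesP x cs :
  reflect (exists2 c, List.In c cs & x \in leaves c) (x \in flatten (map (@leaves X) cs)).
Proof.
elim: cs => [|c cs IH] /=; first by constructor => -[].
rewrite mem_cat; apply: (iffP orP) => [[xc|/IH[d Id xd]]|[d [<-|Id] xd]].
- by exists c; first left.
- by exists d; first right.
- by left.
- by right; apply/IH; exists d.
Qed.

Definition cl t : {set X} := [set x in leaves t].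

Lemma cl_Nd_cons c cs : cl (Nd (c :: cs)) = cl c :|: cl (Nd cs).
Proof. by apply/setP => x; rewrite !inE /= mem_cat. Qed.

Lemma cl_Nd_cat cs ds : cl (Nd (cs ++ ds)) = cl (Nd cs) :|: cl (Nd ds).
Proof. by apply/setP => x; rewrite !inE /= map_cat flatten_cat mem_cat. Qed.

Lemma cl_Nd2 a b : cl (Nd [:: a; b]) = cl a :|: cl b.
Proof. by rewrite !cl_Nd_cons; apply/setP => x; rewrite !inE orbF. Qed.

Lemma cl_Nd_perm cs ds : Permutation cs ds -> cl (Nd cs) = cl (Nd ds).
Proof.
move=> pm; apply/setP => x; rewrite !inE; apply/idP/idP.
- by move/flatten_leavesP => [c Ic Hx]; apply/flatten_leavesP;
    exists c => //; exact: Permutation_in pm Ic.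
- by move/flatten_leavesP => [c Ic Hx]; apply/flatten_leavesP;
    exists c => //; exact: Permutation_in (Permutation_sym pm) Ic.
Qed.

Lemma subtree_child c cs : List.In c cs -> subtree c (Nd cs).
Proof. by move=> Ic; exact: sub_child Ic (Defs.sub_refl c). Qed.

Lemma subtree_trans s w t : subtree s w -> subtree w t -> subtree s t.
Proof. by move=> Hs Hw; elim: Hw Hs => // s' c cs Ic _ IH /IH; exact: sub_child Ic. Qed.

Lemma subtree_NdP s cs :
  subtree s (Nd cs) -> s = Nd cs \/ exists2 c, List.In c cs & subtree s c.
Proof. by move=> H; inversion H; [left | right; exists c]. Qed.

Lemma subtree_LfP s x : subtree s (Lf x) -> s = Lf x.
Proof. by move=> H; inversion H. Qed.

Lemma subtree_leaves s t : subtree s t -> {subset leaves s <= leaves t}.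
Proof.
elim=> [t0 x //|s' c cs Ic _ IH x /IH Hx].
by apply/flatten_leavesP; exists c.
Qed.

Lemma subset_cl_subtree s t : subtree s t -> cl s \subset cl t.
Proof. by move/subtree_leaves => H; apply/subsetP => x; rewrite !inE => /H. Qed.

Lemma subtree_all_nodes (P : nat -> bool) s t :
  subtree s t -> all_nodes P t -> all_nodes P s.
Proof.
elim=> // s' c cs Ic _ IH /= /andP[_ Hcs]; apply: IH.
by have [i Hi <-] := In_nthP c Ic; exact: (all_nthP c Hcs).
Qed.

Lemma subtree_uniq s t : subtree s t -> uniq (leaves t) -> uniq (leaves s).
Proof.
elim=> // s' c cs Ic _ IH U; apply: IH; move: U => /=.
elim: cs Ic => // c' cs IHcs /= Ic; rewrite cat_uniq => /and3P[Uc' _ Ucs].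
by case: Ic => [<-|/IHcs]; last exact.
Qed.

Lemma cl_neq0 (P : nat -> bool) t :
  (forall k, P k -> 0 < k) -> all_nodes P t -> cl t != set0.
Proof.
move=> P_pos; elim/tree_ind_In: t => [x|[|c cs] IH] /=.
- by move=> _; apply/set0Pn; exists x; rewrite !inE.
- by case/andP => /P_pos.
case/andP => _ /andP[/(IH c (or_introl erefl)) /set0Pn[x Hx] _].
by apply/set0Pn; exists x; rewrite cl_Nd_cons in_setU Hx.
Qed.

Lemma disjoint_cl_Nd2 a b : uniq (leaves (Nd [:: a; b])) -> [disjoint cl a & cl b].
Proof.
rewrite /= cats0 cat_uniq => /and3P[_ H _]; rewrite -setI_eq0.
apply/eqP/setP => x; rewrite !inE; apply/negbTE/negP => /andP[xa xb].
by case/negP: H; apply/hasP; exists x.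
Qed.

Lemma leaves_nth_inj d cs i j x : uniq (flatten (map (@leaves X) cs)) ->
  i < size cs -> j < size cs ->
  x \in leaves (nth d cs i) -> x \in leaves (nth d cs j) -> i = j.
Proof.
elim: cs i j => [|c cs IH] [|i] [|j] //=; rewrite cat_uniq => /and3P[_ hd U] Hi Hj.
- move=> xc xj; case/hasP: hd; exists x => //.
  by apply/flatten_leavesP; exists (nth d cs j) => //; exact: In_nth.
- move=> xi xc; case/hasP: hd; exists x => //.
  by apply/flatten_leavesP; exists (nth d cs i) => //; exact: In_nth.
- by move=> xi xj; congr S; exact: IH U Hi Hj xi xj.
Qed.

Lemma subtree_laminar t s w x : uniq (leaves t) -> subtree s t -> subtree w t ->
  x \in leaves s -> x \in leaves w -> subtree s w \/ subtree w s.
Proof.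
elim/tree_ind_In: t s w => [y|cs IH] s w U Hs Hw xs xw.
  by rewrite (subtree_LfP Hs) (subtree_LfP Hw); left; exact: Defs.sub_refl.
case: (subtree_NdP Hs) => [->|[c Ic Sc]]; first by right.
case: (subtree_NdP Hw) => [->|[c' Ic' Sc']]; first by left.
have [i Hi Ei] := In_nthP c Ic; have [j Hj Ej] := In_nthP c Ic'.
have Eij : i = j.
  apply: (leaves_nth_inj (d := c) (x := x) U Hi Hj).
  - by rewrite Ei; exact: (subtree_leaves Sc).
  - by rewrite Ej; exact: (subtree_leaves Sc').
move: Sc'; rewrite -Ej -Eij Ei => Sc'.
exact: IH c Ic s w (subtree_uniq (subtree_child Ic) U) Sc Sc' xs xw.
Qed.

Definition subforest s cs := exists2 c, List.In c cs & subtree s c.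

Lemma contr_clusters t' t : contr t' t ->
  forall s, subtree s t -> exists2 s', subtree s' t' & cl s' = cl s.
Proof.
move=> H; suff [] : cl t' = cl t /\
  forall s, subtree s t -> exists2 s', subtree s' t' & cl s' = cl s by [].
refine (@contr_mut X
  (fun t' t _ => cl t' = cl t /\
     forall s, subtree s t -> exists2 s', subtree s' t' & cl s' = cl s)
  (fun cs ds _ => cl (Nd cs) = cl (Nd ds) /\
     forall s, subforest s ds -> exists2 s', subforest s' cs & cl s' = cl s)
  _ _ _ _ _ _ _ _ H).
- by move=> x; split=> // s /subtree_LfP ->; exists (Lf x) => //; exact: Defs.sub_refl.
- move=> cs ds _ [E Hf]; split=> // s /subtree_NdP[->|/Hf[s' [c Ic Sc] Es]].
    by exists (Nd cs) => //; exact: Defs.sub_refl.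
  by exists s' => //; exact: sub_child Ic Sc.
- by split=> // s [].
- move=> c d cs ds _ [Ec Hc] _ [Ef Hf]; split; first by rewrite !cl_Nd_cons Ec Ef.
  move=> s [d' [<-|Id'] Sd'].
    by have [s' Ss' Es] := Hc s Sd'; exists s' => //; exists c; first left.
  have [s' [c' Ic' Sc'] Es] := Hf s (ex_intro2 _ _ d' Id' Sd').
  by exists s' => //; exists c'; first right.
- move=> cs' cs ds1 ds2 _ [E1 H1] _ [E2 H2].
  split; first by rewrite cl_Nd_cons cl_Nd_cat E1 E2.
  move=> s [d /List.in_app_iff[Id|Id] Sd].
    have [s' [c Ic Sc] Es] := H1 s (ex_intro2 _ _ d Id Sd).
    by exists s' => //; exists (Nd cs'); [left | exact: sub_child Ic Sc].
  have [s' [c Ic Sc] Es] := H2 s (ex_intro2 _ _ d Id Sd).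
  by exists s' => //; exists c; first right.
- move=> cs ds ds' _ [E Hf] pm; split; first by rewrite E (cl_Nd_perm pm).
  move=> s [d Id Sd]; apply: Hf; exists d => //.
  exact: Permutation_in (Permutation_sym pm) Id.
Qed.

End Trees.

Section BigMin.
Variables (A : Type) (x0 : A) (F : A -> nat) (N : nat).

Lemma bigmin_le_nth (s : seq A) i :
  i < size s -> \big[minn/N]_(y <- s) F y <= F (nth x0 s i).
Proof.
elim: s i => // y s IH [|i] /= Hi; rewrite big_cons; first exact: geq_minl.
exact: leq_trans (geq_minr _ _) (IH i Hi).
Qed.

Lemma bigmin_le_idx (s : seq A) : \big[minn/N]_(y <- s) F y <= N.
Proof.
elim: s => [|y s IH]; first by rewrite big_nil.
by rewrite big_cons; exact: leq_trans (geq_minr _ _) IH.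
Qed.

Lemma bigmin_nth (s : seq A) : 0 < size s ->
  (forall i, i < size s -> F (nth x0 s i) <= N) ->
  exists2 i, i < size s & \big[minn/N]_(y <- s) F y = F (nth x0 s i).
Proof.
elim: s => // y s IH _ HF; rewrite big_cons.
case: s IH HF => [|y' s] IH HF.
  by exists 0 => //; rewrite big_nil; apply/minn_idPl/(HF 0).
have [i Hi ->] := IH isT (fun i Hi => HF i.+1 Hi).
case: (leqP (F y) (F (nth x0 (y' :: s) i))) => h.
  by exists 0 => //; apply/minn_idPl.
by exists i.+1 => //; apply/minn_idPr/ltnW.
Qed.

End BigMin.

Section Minimum.
Variables (X : finType) (sigma : X -> 'I_#|X|).
Implicit Types (A C S : {set X}) (t : tree X).

(* On [set0] this is [#|X|], which exceeds every value of [sigma]. *)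
Definition smin S : nat := \big[minn/#|X|]_(x <- enum S) sigma x.

Lemma smin_le S x : x \in S -> smin S <= sigma x.
Proof. by rewrite -mem_enum => /(nthP x)[i Hi <-]; exact: bigmin_le_nth. Qed.

Lemma smin_mem S : S != set0 -> exists2 x, x \in S & smin S = sigma x.
Proof.
case/set0Pn => x Sx.
have S_gt0 : 0 < size (enum S) by rewrite -cardE card_gt0; apply/set0Pn; exists x.
rewrite /smin; have [i Hi ->] := bigmin_nth (x0 := x) (F := fun y => nat_of_ord (sigma y))
  S_gt0 (fun i _ => ltnW (ltn_ord _)).
by exists (nth x (enum S) i); rewrite // -mem_enum mem_nth.
Qed.

Lemma smin_eq S (m : nat) : (exists2 x, x \in S & m = sigma x) ->
  (forall x, x \in S -> m <= sigma x) -> smin S = m.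
Proof.
move=> [x Sx ->] Hm.
have [|y Sy Ey] := @smin_mem S; first by apply/set0Pn; exists x.
by rewrite Ey; apply/eqP; rewrite eqn_leq -{1}Ey smin_le //= Hm.
Qed.

Lemma smin_setU A C : A != set0 -> C != set0 ->
  smin (A :|: C) = minn (smin A) (smin C).
Proof.
move=> /smin_mem[a Aa Ea] /smin_mem[c Cc Ec]; apply: smin_eq => [|x].
  rewrite Ea Ec; case: (leqP (sigma a) (sigma c)) => h.
    by exists a; rewrite ?inE ?Aa // (minn_idPl h).
  by exists c; rewrite ?inE ?Cc ?orbT // (minn_idPr (ltnW h)).
by rewrite inE geq_min => /orP[/smin_le -> | /smin_le ->]; rewrite ?orbT.
Qed.

Lemma smin_subset A C : A != set0 -> A \subset C -> smin C <= smin A.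
Proof. by move=> /smin_mem[a Aa ->] /subsetP sAC; exact/smin_le/sAC. Qed.

Lemma mu_smin t : mu sigma t = smin (cl t).
Proof.
rewrite /mu; have [t0|t_neq0] := eqVneq (cl t) set0.
  have -> : leaves t = [::].
    case E: (leaves t) => [//|x s]; have := in_set0 x.
    by rewrite -t0 inE E mem_head.
  by rewrite /smin t0 enum_set0 !big_nil.
apply/esym/smin_eq => [|x]; last first.
  by rewrite inE => /(nthP x)[i Hi <-]; exact: bigmin_le_nth.
have [x0 Hx0] := set0Pn _ t_neq0; rewrite inE in Hx0.
have t_gt0 : 0 < size (leaves t) by case: (leaves t) Hx0.
have [i Hi ->] := bigmin_nth (x0 := x0) (F := fun y => nat_of_ord (sigma y))
  t_gt0 (fun i _ => ltnW (ltn_ord _)).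
by exists (nth x0 (leaves t) i); rewrite // inE mem_nth.
Qed.

Hypothesis sigma_inj : injective sigma.

Lemma smin_disjoint_neq A C : A != set0 -> C != set0 -> [disjoint A & C] ->
  smin A != smin C.
Proof.
move=> /smin_mem[a Aa ->] /smin_mem[c Cc ->] AC.
apply/eqP => /ord_inj/sigma_inj Eac.
by move: (disjointFr AC Aa); rewrite Eac Cc.
Qed.

End Minimum.

Section Blocks.
Variables (X : finType) (sigma : X -> 'I_#|X|) (T : tree X) (p : nat).
Variable B : 'I_p -> {set X}.
Hypotheses (sigma_inj : injective sigma)
  (T_binary : all_nodes (fun k => k == 2) T) (T_uniq : uniq (leaves T))
  (B_neq0 : forall i, B i != set0)
  (B_inj : forall i j x, x \in B i -> x \in B j -> i = j)
  (B_cluster : forall i, exists2 s, subtree s T & cl s = B i).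
Implicit Types (I : {set 'I_p}) (S : {set X}) (w a b : tree X) (z : int).

Definition block_union I : {set X} := \bigcup_(i in I) B i.

(* The part of sigma(V_I(B)) coming from the vertices below [w]. *)
Definition ola_VI_below w z := exists2 w', subtree w' w &
  [/\ is_internal w', exists2 I : {set 'I_p}, 1 < #|I| & cl w' = block_union I
    & ola sigma w' = z].

(* For [S = L(T_v)] these are the values -s_t with s_t <> min_t s_t. *)
Definition nonmin_value S z := exists i,
  [/\ B i \subset S, smin sigma (B i) != smin sigma S & z = (- (smin sigma (B i))%:Z)%R].

Lemma block_union_neq0 I : I != set0 -> block_union I != set0.
Proof.
case/set0Pn => i iI; have [x Bx] := set0Pn _ (B_neq0 i).
by apply/set0Pn; exists x; apply/bigcupP; exists i.
Qed.

Lemma block_union_subset i I : B i \subset block_union I -> i \in I.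
Proof.
move/subsetP => sBI; have [x Bx] := set0Pn _ (B_neq0 i).
by have /bigcupP[j jI /(B_inj Bx) ->] := sBI x Bx.
Qed.

Lemma block_union_in_block I k : 1 < #|I| -> ~ block_union I \subset B k.
Proof.
rewrite /block_union => I_gt1 /subsetP sIk.
have : 0 < #|I :\ k|.
  by move: I_gt1; rewrite (cardsD1 k); case: (k \in I); rewrite ?add1n ?add0n // => /ltnW.
case/card_gt0P => i; rewrite !inE => /andP[ik iI].
have [x Bx] := set0Pn _ (B_neq0 i).
have xI : x \in \bigcup_(j in I) B j by apply/bigcupP; exists i.
by move/eqP: ik; apply; exact: B_inj Bx (sIk x xI).
Qed.

Lemma ola_VI_below_in_block w k z : cl w \subset B k -> ~ ola_VI_below w z.
Proof.
move=> wk [w' Sw' [_ [I I_gt1 EI] _]]; apply: (block_union_in_block (k := k) I_gt1).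
by rewrite -EI; exact: subset_trans (subset_cl_subtree Sw') wk.
Qed.

Lemma nonmin_value_in_block S k z : S \subset B k -> ~ nonmin_value S z.
Proof.
move=> Sk [i [iS Ni _]]; have [x Bx] := set0Pn _ (B_neq0 i).
have Eik : i = k by apply: B_inj Bx (subsetP Sk x (subsetP iS x Bx)).
suff ES : S = B i by rewrite ES eqxx in Ni.
by apply/eqP; rewrite eqEsubset iS Eik Sk.
Qed.

Lemma nonmin_value_subset S S' z : S \subset S' -> nonmin_value S z -> nonmin_value S' z.
Proof.
move=> sSS' [i [iS Ni ->]]; exists i; split => //; first exact: subset_trans iS sSS'.
have S_neq0 : S != set0.
  by apply: contraNneq (B_neq0 i) => S0; rewrite -subset0 -S0.
rewrite neq_ltn; apply/orP; right; apply: leq_ltn_trans (smin_subset sigma S_neq0 sSS') _.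
by rewrite ltn_neqAle eq_sym Ni smin_subset.
Qed.

Lemma nonmin_value_setU Ia Ib z : Ia != set0 -> Ib != set0 ->
  [disjoint block_union Ia & block_union Ib] ->
  nonmin_value (block_union Ia :|: block_union Ib) z <->
  z = (- (maxn (smin sigma (block_union Ia)) (smin sigma (block_union Ib)))%:Z)%R
  \/ nonmin_value (block_union Ia) z \/ nonmin_value (block_union Ib) z.
Proof.
move=> Ia0 Ib0 dis.
wlog lt_ab : Ia Ib Ia0 Ib0 dis /
    smin sigma (block_union Ia) < smin sigma (block_union Ib).
  move=> H; have := smin_disjoint_neq sigma_inj (block_union_neq0 Ia0)
    (block_union_neq0 Ib0) dis.
  rewrite neq_ltn => /orP[lt|lt]; first exact: H.
  by rewrite setUC maxnC H // 1?disjoint_sym //; tauto.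
set Ua := block_union Ia; set Ub := block_union Ib.
have Emin : smin sigma (Ua :|: Ub) = smin sigma Ua.
  by rewrite smin_setU ?block_union_neq0 //; exact/minn_idPl/ltnW.
have sUab : Ua :|: Ub = block_union (Ia :|: Ib) by rewrite /block_union bigcup_setU.
rewrite (maxn_idPr (ltnW lt_ab)); split.
- case=> i [iU Ni ->]; rewrite Emin in Ni.
  have := iU; rewrite sUab => /block_union_subset; rewrite inE => /orP[iA|iB].
    by right; left; exists i; split; rewrite ?bigcup_sup.
  have [Ei|N'] := eqVneq (smin sigma (B i)) (smin sigma Ub); first by left; rewrite Ei.
  by right; right; exists i; split; rewrite ?bigcup_sup.
- case=> [->|[[i [iA Ni ->]]|[i [iB Ni ->]]]].
  + (* -min b is the minimum of the block of b containing the leaf attaining it. *)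
    have [y Uy Ey] := smin_mem sigma (block_union_neq0 Ib0).
    have /bigcupP[j jB By] := Uy.
    have Ej : smin sigma (B j) = smin sigma Ub.
      apply/eqP; rewrite eqn_leq Ey smin_le //= -Ey smin_subset ?B_neq0 //.
      exact: bigcup_sup.
    exists j; split; last by rewrite Ej.
      by rewrite subsetU // (bigcup_sup _ jB) orbT.
    by rewrite Emin Ej gtn_eqF.
  + by exists i; split; rewrite ?Emin // subsetU ?iA.
  + exists i; split => //; first by rewrite subsetU ?iB ?orbT.
    rewrite Emin gtn_eqF //; apply: leq_trans lt_ab _.
    exact: smin_subset (B_neq0 i) iB.
Qed.

Lemma ola_VI_below_Nd2 a b z :
  (exists2 I : {set 'I_p}, 1 < #|I| & cl (Nd [:: a; b]) = block_union I) ->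
  ola_VI_below (Nd [:: a; b]) z <->
  z = ola sigma (Nd [:: a; b]) \/ ola_VI_below a z \/ ola_VI_below b z.
Proof.
move=> wI; split.
- case=> w' /subtree_NdP[-> [_ _ ->]|[c Ic Sc] H]; first by left.
  by right; case: Ic Sc => [<-|[<-|[]]] Sc; [left | right]; exists w'.
- case=> [->|[[w' Sw' H]|[w' Sw' H]]].
  + by exists (Nd [:: a; b]); first exact: Defs.sub_refl.
  + by exists w' => //; apply: subtree_trans Sw' (subtree_child _); left.
  + by exists w' => //; apply: subtree_trans Sw' (subtree_child _); right; left.
Qed.

Lemma cl_subtree_neq0 s : subtree s T -> cl s != set0.
Proof.
move/subtree_all_nodes/(_ T_binary); apply: cl_neq0.
by move=> k /eqP ->.
Qed.

Lemma block_split a b I i : subtree (Nd [:: a; b]) T -> 1 < #|I| ->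
  cl (Nd [:: a; b]) = block_union I -> i \in I ->
  B i \subset cl a \/ B i \subset cl b.
Proof.
move=> Sw I_gt1 EI iI; have [s Ss Es] := B_cluster i.
have not_above : ~ cl (Nd [:: a; b]) \subset B i.
  by rewrite EI; exact: block_union_in_block.
have [x Bx] := set0Pn _ (B_neq0 i).
have xs : x \in leaves s by move: Bx; rewrite -Es inE.
have : x \in cl (Nd [:: a; b]) by rewrite EI; apply/bigcupP; exists i.
rewrite inE => xw.
case: (subtree_laminar T_uniq Ss Sw xs xw) => [/subtree_NdP[Esw|[c Ic Sc]]|Sws].
- by case: not_above; rewrite -Es Esw.
- by case: Ic Sc => [<-|[<-|[]]] Sc; [left | right]; rewrite -Es; exact: subset_cl_subtree.
- by case: not_above; rewrite -Es; exact: subset_cl_subtree.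
Qed.

Lemma child_block_union c c' I : cl c :|: cl c' = block_union I ->
  [disjoint cl c & cl c'] ->
  (forall i, i \in I -> B i \subset cl c \/ B i \subset cl c') ->
  cl c = block_union [set i in I | B i \subset cl c].
Proof.
move=> EI dis Hsplit; apply/eqP; rewrite eqEsubset; apply/andP; split; last first.
  by apply/bigcupsP => i; rewrite inE => /andP[].
apply/subsetP => x xc.
have /bigcupP[i iI Bx] : x \in block_union I by rewrite -EI inE xc.
apply/bigcupP; exists i => //; rewrite inE iI /=.
case: (Hsplit i iI) => // /subsetP/(_ x Bx) xc'.
by move: (disjointFr dis xc); rewrite xc'.
Qed.

Lemma single_block_iff w k z : cl w \subset B k ->
  ola_VI_below w z <-> nonmin_value (cl w) z.
Proof.
by move=> wk; split => [/(ola_VI_below_in_block wk)|/(nonmin_value_in_block wk)].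
Qed.

Lemma ola_VI_below_block_union w I z : subtree w T -> I != set0 ->
  cl w = block_union I -> ola_VI_below w z <-> nonmin_value (cl w) z.
Proof.
elim/tree_ind_In: w I => [x|cs IH] I Sw I0 EI.
  have /bigcupP[k _ Bx] : x \in block_union I by rewrite -EI !inE.
  by apply: (single_block_iff (k := k)); apply/subsetP => y; rewrite !inE => /eqP ->.
case: (leqP #|I| 1) => [I_le1|I_gt1].
  have /cards1P[k Ik] : #|I| == 1 by rewrite eqn_leq I_le1 card_gt0.
  by apply: (single_block_iff (k := k)); rewrite EI Ik /block_union big_set1.
have /= /andP[/eqP size_cs _] := subtree_all_nodes Sw T_binary.
case: cs IH Sw EI size_cs => [|a [|b []]] // IH Sw EI _.
have Sa : subtree a T by apply: subtree_trans Sw; apply: subtree_child; left.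
have Sb : subtree b T by apply: subtree_trans Sw; apply: subtree_child; right; left.
have dab := disjoint_cl_Nd2 (subtree_uniq Sw T_uniq).
have EIab : cl a :|: cl b = block_union I by rewrite -cl_Nd2.
have Hsplit := block_split Sw I_gt1 EI.
have Ea := child_block_union EIab dab Hsplit.
have Eb : cl b = block_union [set i in I | B i \subset cl b].
  apply: (child_block_union (c' := a)); rewrite 1?setUC 1?disjoint_sym //.
  by move=> i /Hsplit; tauto.
set Ia := [set i in I | _] in Ea; set Ib := [set i in I | _] in Eb.
have Ia0 : Ia != set0.
  by apply: contraNneq (cl_subtree_neq0 Sa) => Ia0; rewrite Ea Ia0 /block_union big_set0.
have Ib0 : Ib != set0.
  by apply: contraNneq (cl_subtree_neq0 Sb) => Ib0; rewrite Eb Ib0 /block_union big_set0.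
rewrite ola_VI_below_Nd2; last by exists I.
rewrite (IH a (or_introl erefl) Ia Sa Ia0 Ea).
rewrite (IH b (or_intror (or_introl erefl)) Ib Sb Ib0 Eb).
rewrite cl_Nd2; have := nonmin_value_setU z Ia0 Ib0; rewrite -Ea -Eb => /(_ dab) ->.
by rewrite /= !mu_smin.
Qed.

End Blocks.

Lemma mem_flatten_mask (X : finType) (d : tree X) (b : bitseq) (cs : seq (tree X)) x :
  size b = size cs ->
  reflect (exists2 i, i < size cs & nth false b i && (x \in leaves (nth d cs i)))
          (x \in flatten (map (@leaves X) (mask b cs))).
Proof.
elim: cs b => [|c cs IH] [|bb b] //= => [_|[sb]]; first by constructor => -[].
case: bb => /=; last first.
  by apply: (iffP (IH _ sb)) => [[i Hi Hx]|[[|i] //= Hi Hx]]; [exists i.+1 | exists i].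
rewrite mem_cat; apply: (iffP orP) => [[xc|/(IH _ sb)[i Hi Hx]]|[[|i] /= Hi Hx]].
- by exists 0.
- by exists i.+1.
- by left.
- by right; apply/(IH _ sb); exists i.
Qed.

Lemma card_nth_set n (b : bitseq) : size b = n ->
  #|[set i : 'I_n | nth false b i]| = count id b.
Proof.
move=> sb; rewrite -(size_mask (s := enum 'I_n)) ?size_enum_ord //.
rewrite mask_enum_ord size_filter -sum1_count -sum1_card big_enum_cond.
by apply: eq_bigl => i; rewrite inE.
Qed.

Section Resolution.
Variables (X : finType) (sigma : X -> 'I_#|X|) (T Tt : tree X) (us : seq (tree X)).
Hypotheses (T_planted : planted_tree T) (Tt_resolves : resolves Tt T)
  (sigma_ord : leaf_ordering sigma) (v_in_T : subtree (Nd us) T).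

Let child (i : 'I_(size us)) : tree X := nth (Nd [::]) us i.
Let block (i : 'I_(size us)) : {set X} := cl (child i).

Lemma child_in_T i : subtree (child i) T.
Proof. exact: subtree_trans (subtree_child (In_nth _ (ltn_ord i))) v_in_T. Qed.

Lemma block_neq0 i : block i != set0.
Proof.
have [T_nodes _] := T_planted.
by apply: cl_neq0 (subtree_all_nodes (child_in_T i) T_nodes); exact: ltnW.
Qed.

Lemma block_inj i j x : x \in block i -> x \in block j -> i = j.
Proof.
have [_ [T_uniq _]] := T_planted.
rewrite !inE => xi xj; apply/val_inj.
exact: leaves_nth_inj (subtree_uniq v_in_T T_uniq) (ltn_ord i) (ltn_ord j) xi xj.
Qed.

Lemma block_cluster i : exists2 s, subtree s Tt & cl s = block i.
Proof.
by have [_ Tt_contr] := Tt_resolves; exact: (contr_clusters Tt_contr (child_in_T i)).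
Qed.

Lemma cl_Nd_blocks : cl (Nd us) = block_union block setT.
Proof.
apply/setP => x; rewrite inE /=; apply/flatten_leavesP/bigcupP => [[c Ic xc]|[i _ xi]].
  have [i Hi Ec] := In_nthP (Nd [::]) Ic.
  by exists (Ordinal Hi) => //; rewrite inE /child /= Ec.
by exists (child i); [exact: In_nth | rewrite inE in xi].
Qed.

Lemma mask_block_union b : size b = size us ->
  flatten (map (@leaves X) (mask b us))
    =i block_union block [set i : 'I_(size us) | nth false b i].
Proof.
move=> sb x; apply/(mem_flatten_mask (Nd [::]) x sb)/bigcupP => [[i Hi /andP[bi xi]]|[i]].
  by exists (Ordinal Hi); rewrite ?inE.
by rewrite !inE => bi xi; exists i => //; rewrite bi.
Qed.

Lemma in_VI_block_union w : in_VI Tt us w <->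
  [/\ subtree w Tt, is_internal w &
      exists2 I : {set 'I_(size us)}, 1 < #|I| & cl w = block_union block I].
Proof.
split => [[Sw [Iw [b [sb [cb Eb]]]]]|[Sw Iw [I I_gt1 EI]]].
  split => //; exists [set i : 'I_(size us) | nth false b i]; first by rewrite card_nth_set.
  by apply/setP => x; rewrite inE Eb mask_block_union.
pose b := [seq i \in I | i <- enum 'I_(size us)].
have sb : size b = size us by rewrite size_map size_enum_ord.
have bE : [set i : 'I_(size us) | nth false b i] = I.
  by apply/setP => i; rewrite inE (nth_map i) ?size_enum_ord // nth_ord_enum.
split => //; split => //; exists b; split => //; split.
  by rewrite -(card_nth_set sb) bE.
by move=> x; rewrite mask_block_union // bE -EI inE.
Qed.

Lemma size_us_gt0 : 0 < size us.
Proof.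
have [T_nodes _] := T_planted.
by have /= /andP[/ltnW] := subtree_all_nodes v_in_T T_nodes.
Qed.

Lemma bigmin_mu_children : \big[minn/#|X|]_(u <- us) mu sigma u = smin sigma (cl (Nd us)).
Proof.
apply/esym/smin_eq => [|x].
  have [i Hi ->] := bigmin_nth (x0 := Nd [::]) (F := mu sigma) size_us_gt0
    (fun i _ => bigmin_le_idx _ _ _).
  have [y By Ey] := smin_mem sigma (block_neq0 (Ordinal Hi)).
  exists y; last by rewrite mu_smin.
  by rewrite cl_Nd_blocks; apply/bigcupP; exists (Ordinal Hi).
rewrite cl_Nd_blocks => /bigcupP[i _ xi].
apply: leq_trans (bigmin_le_nth (Nd [::]) _ _ (ltn_ord i)) _.
by rewrite mu_smin; exact: smin_le.
Qed.

Lemma target_nonmin_value z :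
  target sigma us z <-> nonmin_value sigma block (cl (Nd us)) z.
Proof.
have sub_block i : block i \subset cl (Nd us) by rewrite cl_Nd_blocks bigcup_sup.
rewrite /target bigmin_mu_children; split => [[t [Ht [Nt ->]]]|[i [_ Ni ->]]].
  exists (Ordinal Ht); rewrite mu_smin in Nt.
  by rewrite /block /child /= mu_smin; split => //; exact: (sub_block (Ordinal Ht)).
by exists i; rewrite /block /child mu_smin in Ni *.
Qed.

Lemma ola_VI_resolution z : ola_VI sigma Tt us z <-> target sigma us z.
Proof.
have [[Tt_binary [Tt_uniq _]] Tt_contr] := Tt_resolves.
have below := ola_VI_below_block_union (bij_inj sigma_ord) Tt_binary Tt_uniq
  block_neq0 block_inj block_cluster.
have [w0 Sw0 Ew0] := contr_clusters Tt_contr v_in_T.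
rewrite cl_Nd_blocks in Ew0.
have setT_neq0 : [set: 'I_(size us)] != set0.
  by apply/set0Pn; exists (Ordinal size_us_gt0).
rewrite target_nonmin_value cl_Nd_blocks -Ew0; split.
- case=> w [/in_VI_block_union[Sw Iw [I I_gt1 EI]] <-].
  have I_neq0 : I != set0 by rewrite -card_gt0 ltnW.
  apply: (nonmin_value_subset block_neq0 (S := cl w)).
    by rewrite EI Ew0; apply/bigcupsP => i _; exact: bigcup_sup.
  apply/(below w I _ Sw I_neq0 EI).
  by exists w; [exact: Defs.sub_refl | split => //; exists I].
- move/(below w0 setT z Sw0 setT_neq0 Ew0) => [w Sw [Iw wI <-]].
  exists w; split => //.
  by apply/in_VI_block_union; split => //; exact: subtree_trans Sw Sw0.
Qed.

End Resolution.

Theorem mainTheorem8 (X : finType) (T T' T'' : tree X)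
    (sigma : X -> 'I_#|X|) (us : seq (tree X)) :
  planted_tree T -> resolves T' T -> resolves T'' T ->
  leaf_ordering sigma ->
  subtree (Nd us) T -> 2 <= size us ->
  (forall z : int, ola_VI sigma T' us z <-> target sigma us z) /\
  (forall z : int, ola_VI sigma T'' us z <-> target sigma us z).
Proof.
(* [2 <= size us] already follows from [planted_tree T]. *)
move=> T_planted T'_resolves T''_resolves sigma_ord v_in_T _.
split => z.
- exact: ola_VI_resolution T_planted T'_resolves sigma_ord v_in_T z.
- exact: ola_VI_resolution T_planted T''_resolves sigma_ord v_in_T z.
Qed.
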